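(* Let $n\ge2$, $0<\varepsilon<1$ and $s\ge\lambda\ge1$. Let $G$ be an $n$-vertex $(\varepsilon,s)$-expander and let $U\subseteq V(G)$ with $|U|\le 2n/3$. Then there is a set $U'\subseteq U$ with $|N_G(U')|\ge\lambda|U'|$ and $|U'|\ge\frac{\varepsilon|U|}{3\lambda(\log n)^2}$.
   Context: Logarithms are base 2. For $U\subseteq V(G)$, $N_G(U)$ is the set of vertices outside $U$ with a neighbour in $U$; $G-F$ is $G$ with edge set $F$ deleted. An $n$-vertex graph $G$ is an $(\varepsilon,s)$-expander if for every $U\subseteq V(G)$, $F\subseteq E(G)$ with $1\le|U|\le\frac23n$ and $|F|\le s|U|$ we have $|N_{G-F}(U)|\ge\varepsilon|U|/(\log n)^2$. *)

From HB Require Import structures.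
From mathcomp Require Import all_boot all_order all_algebra.
From mathcomp Require Import reals exp.
Set Implicit Arguments. Unset Strict Implicit. Unset Printing Implicit Defensive.
Import Order.TTheory GRing.Theory Num.Theory.
Local Open Scope ring_scope.

Definition log2 {R : realType} (x : R) : R := ln x / ln 2.

(* A simple graph on a finite vertex type T is a symmetric irreflexive
   relation e : rel T.  Its edges are the 2-element sets {x,y} with e x y. *)
Definition edges {T : finType} (e : rel T) : {set {set T}} :=
  [set [set x; y] | x in T, y in T & e x y].

Definition del_edges {T : finType} (e : rel T) (F : {set {set T}}) : rel T :=
  fun x y => e x y && ([set x; y] \notin F).

Definition nbhd {T : finType} (e : rel T) (U : {set T}) : {set T} :=
  [set v | (v \notin U) && [exists u in U, e u v]].

Definition expander {R : realType} {T : finType} (e : rel T) (eps s : R) : Prop :=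
  forall (U : {set T}) (F : {set {set T}}),
    (1 <= #|U|)%N ->
    (#|U|%:R <= 2 / 3 * #|T|%:R :> R) ->
    F \subset edges e ->
    (#|F|%:R <= s * #|U|%:R :> R) ->
    eps * #|U|%:R / (log2 (#|T|%:R : R)) ^+ 2 <= #|nbhd (del_edges e F) U|%:R.

(* Take X ⊆ U maximal subject to having at least λ|X| neighbours outside U.
   Maximality forces every u ∈ U \ X to have at most λ neighbours outside U
   that X does not already reach.  Deleting the at most λ|U| ≤ s|U| edges
   from U \ X to these fresh neighbours leaves N(U) inside the neighbourhood
   of X outside U, so expansion bounds that neighbourhood below by
   ε|U|/(log n)^2; maximality bounds it above by λ(|X|+1) ≤ 2λ|X|. *)
From HB Require Import structures.
From mathcomp Require Import all_boot all_order all_algebra.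
From mathcomp Require Import reals exp.
From mathcomp Require Import lra.
Set Implicit Arguments. Unset Strict Implicit. Unset Printing Implicit Defensive.
Import Order.TTheory GRing.Theory Num.Theory.
Local Open Scope ring_scope.

Lemma card_bigcup_le (I T : finType) (P : pred I) (A : I -> {set T}) :
  (#|\bigcup_(i | P i) A i| <= \sum_(i | P i) #|A i|)%N.
Proof.
apply: (big_ind2 (fun (S : {set T}) (n : nat) => #|S| <= n)%N) => //.
- by rewrite cards0.
- move=> S1 n1 S2 n2 h1 h2; apply: leq_trans (leq_card_setU S1 S2) _.
  exact: leq_add.
Qed.

Lemma log2_ge1 (R : realType) (n : nat) : (2 <= n)%N -> 1 <= log2 (n%:R : R).
Proof.
move=> n_ge2; have ln2_gt0 : 0 < ln (2 : R) by rewrite ln_gt0 ?ltr1n.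
rewrite /log2 ler_pdivlMr // mul1r ler_ln ?posrE ?ler_nat //.
by rewrite ltr0n (leq_trans _ n_ge2).
Qed.

Lemma le_div_mul3 (R : realFieldType) (eps lam d x : R) :
  eps <= 1 -> 1 <= lam -> 1 <= d -> 0 <= x ->
  eps * x / (3 * lam * d) <= x.
Proof.
move=> eps_le1 lam_ge1 d_ge1 x_ge0.
have lamd_ge1 : 1 <= lam * d by nra.
rewrite ler_pdivrMr; last by nra.
nra.
Qed.

Lemma div_le_of_lt_mulD1 (R : realFieldType) (a d lam x : R) :
  1 <= lam -> 0 < d -> 1 <= x -> a / d < lam * (x + 1) ->
  a / (3 * lam * d) <= x.
Proof.
move=> lam_ge1 d_gt0 x_ge1 lt_a.
have -> : a / (3 * lam * d) = a / d / (3 * lam).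
  by rewrite invfM mulrA mulrAC.
rewrite ler_pdivrMr; last by lra.
nra.
Qed.

Section OuterNeighbourhood.
Variables (T : finType) (e : rel T) (U : {set T}).

Definition ext_nbhd (X : {set T}) : {set T} :=
  [set v | (v \notin U) && [exists u in X, e u v]].

Definition fresh_nbrs (X : {set T}) (u : T) : {set T} :=
  [set v | [&& e u v, v \notin U & v \notin ext_nbhd X]].

Definition fresh_edges (X : {set T}) : {set {set T}} :=
  \bigcup_(u in U :\: X) [set [set u; v] | v in fresh_nbrs X u].

Lemma ext_nbhd0 : ext_nbhd set0 = set0.
Proof.
apply/setP => v; rewrite !inE andbC; case: existsP => // -[u].
by rewrite inE.
Qed.

Lemma ext_nbhdS (X Y : {set T}) : X \subset Y -> ext_nbhd X \subset ext_nbhd Y.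
Proof.
move=> sXY; apply/subsetP => v; rewrite !inE => /andP[-> /existsP[u /andP[Xu uv]]].
by apply/existsP; exists u; rewrite (subsetP sXY).
Qed.

Lemma ext_nbhd_sub_nbhd (X : {set T}) : X \subset U -> ext_nbhd X \subset nbhd e X.
Proof.
move=> sXU; apply/subsetP => v; rewrite !inE => /andP[Uv ->]; rewrite andbT.
by apply: contra Uv; apply: (subsetP sXU).
Qed.

Lemma card_ext_nbhd_setU1 (X : {set T}) (u : T) :
  (#|ext_nbhd X| + #|fresh_nbrs X u| <= #|ext_nbhd (u |: X)|)%N.
Proof.
have disj : ext_nbhd X :&: fresh_nbrs X u = set0.
  apply/setP => v; rewrite in_setI in_set0 [v \in fresh_nbrs _ _]inE.
  by case: (v \in ext_nbhd X); rewrite ?andbF.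
rewrite -cardsUI disj cards0 addn0 subset_leq_card //.
apply/subsetP => v; rewrite in_setU => /orP[|].
  by apply/subsetP: v; apply: ext_nbhdS; apply: subsetUr.
rewrite !inE => /and3P[uv -> _]; apply/existsP; exists u.
by rewrite setU11.
Qed.

Lemma fresh_edges_sub_edges (X : {set T}) : fresh_edges X \subset edges e.
Proof.
apply/subsetP => f /bigcupP[u _ /imsetP[v]].
rewrite inE => /and3P[uv _ _] ->.
by apply/imset2P; exists u v; rewrite ?inE.
Qed.

Lemma card_fresh_edges (X : {set T}) :
  (#|fresh_edges X| <= \sum_(u in U :\: X) #|fresh_nbrs X u|)%N.
Proof.
apply: leq_trans (card_bigcup_le _ _) _.
by apply: leq_sum => u _; apply: leq_imset_card.
Qed.

Lemma nbhd_del_fresh_edges (X : {set T}) :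
  nbhd (del_edges e (fresh_edges X)) U \subset ext_nbhd X.
Proof.
apply/subsetP => v; rewrite inE => /andP[Uv /existsP[u /andP[Uu]]].
case/andP => uv not_deleted; apply: contraNT not_deleted => extXv.
apply/bigcupP; exists u.
  rewrite inE Uu andbT; apply: contraNN extXv => Xu.
  by rewrite inE Uv; apply/existsP; exists u; rewrite Xu.
by apply/imsetP; exists v; rewrite // inE uv Uv.
Qed.

Variables (R : realType) (lam : R).

Definition expanding (X : {set T}) : bool :=
  (X \subset U) && (lam * #|X|%:R <= #|ext_nbhd X|%:R).

Variable X : {set T}.
Hypotheses (expX : expanding X)
  (maxX : forall Y : {set T}, expanding Y -> (#|Y| <= #|X|)%N).

Lemma not_expanding_setU1 (u : T) : u \in U :\: X -> ~~ expanding (u |: X).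
Proof.
rewrite inE => /andP[Xu _]; apply/negP => /maxX.
by rewrite cardsU1 Xu ltnn.
Qed.

Lemma expanding_setU1 (u : T) (r : R) :
  u \in U :\: X -> lam * (#|X|%:R + 1) <= #|ext_nbhd X|%:R + r ->
  r <= #|fresh_nbrs X u|%:R -> expanding (u |: X).
Proof.
move=> UXu le_lam le_r; have /andP[sXU lamX] := expX.
move: UXu; rewrite inE => /andP[Xu Uu].
rewrite /expanding subUset sub1set Uu sXU cardsU1 Xu natrD addrC /=.
apply: (le_trans le_lam); apply: le_trans (lerD (lexx _) le_r) _.
by rewrite -natrD ler_nat card_ext_nbhd_setU1.
Qed.

Lemma card_fresh_nbrs_le (u : T) : u \in U :\: X -> #|fresh_nbrs X u|%:R <= lam.
Proof.
move=> UXu; rewrite leNgt; apply/negP => lt_lam.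
apply: (negP (not_expanding_setU1 UXu)); apply: (expanding_setU1 UXu _ (ltW lt_lam)).
by rewrite mulrDr mulr1 lerD2r; case/andP: expX.
Qed.

Lemma card_ext_nbhd_lt (u : T) : u \in U :\: X ->
  #|ext_nbhd X|%:R < lam * (#|X|%:R + 1).
Proof.
move=> UXu; rewrite ltNge; apply/negP => le_lam.
apply: (negP (not_expanding_setU1 UXu)).
by apply: (expanding_setU1 (r := 0) UXu); rewrite ?addr0.
Qed.

Lemma card_fresh_edges_le : 0 <= lam -> #|fresh_edges X|%:R <= lam * #|U|%:R.
Proof.
move=> lam_ge0; apply: le_trans (_ : (\sum_(u in U :\: X) #|fresh_nbrs X u|)%:R <= _).
  by rewrite ler_nat card_fresh_edges.
rewrite natr_sum; apply: le_trans (_ : \sum_(u in U :\: X) lam <= _).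
  by apply: ler_sum => u; apply: card_fresh_nbrs_le.
rewrite sumr_const -[lam *+ _]mulr_natr; apply: ler_wpM2l => //; rewrite ler_nat.
by rewrite subset_leq_card // subsetDl.
Qed.

Lemma card_ext_nbhd_ge (eps s : R) :
  expander e eps s -> 0 <= lam -> lam <= s -> (1 <= #|U|)%N ->
  #|U|%:R <= 2 / 3 * #|T|%:R :> R ->
  eps * #|U|%:R / log2 (#|T|%:R : R) ^+ 2 <= #|ext_nbhd X|%:R.
Proof.
move=> expG lam_ge0 lam_le_s U_gt0 U_small.
apply: le_trans (expG U (fresh_edges X) U_gt0 U_small _ _) _.
- exact: fresh_edges_sub_edges.
- apply: le_trans (card_fresh_edges_le lam_ge0) _.
  by rewrite ler_wpM2r.
- by rewrite ler_nat subset_leq_card // nbhd_del_fresh_edges.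
Qed.

End OuterNeighbourhood.

Theorem mainTheorem15 (R : realType) (T : finType) (e : rel T)
    (e_sym : symmetric e) (e_irr : irreflexive e)
    (eps s lam : R) :
  (2 <= #|T|)%N ->
  0 < eps -> eps < 1 ->
  1 <= lam -> lam <= s ->
  expander e eps s ->
  forall U : {set T}, (#|U|%:R <= 2 / 3 * #|T|%:R :> R) ->
  exists U' : {set T},
    [/\ U' \subset U,
        (lam * #|U'|%:R <= #|nbhd e U'|%:R :> R)
      & (eps * #|U|%:R / (3 * lam * (log2 (#|T|%:R : R)) ^+ 2) <= #|U'|%:R :> R)].
Proof.
move=> n_ge2 eps_gt0 eps_lt1 lam_ge1 lam_le_s expG U U_small.
have d_ge1 : 1 <= log2 (#|T|%:R : R) ^+ 2 by rewrite exprn_ege1 // log2_ge1.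
have exp0 : expanding e U lam set0 by rewrite /expanding sub0set cards0 mulr0 ler0n.
case: (arg_maxnP (fun X : {set T} => #|X|) exp0) => X expX maxX.
have /andP[sXU lamX] := expX.
exists X; split => //.
  by apply: le_trans lamX _; rewrite ler_nat subset_leq_card // ext_nbhd_sub_nbhd.
have [UX0 | [u UXu]] := set_0Vmem (U :\: X).
  have <- : U = X by apply/eqP; rewrite eqEsubset sXU andbT -setD_eq0 UX0.
  exact: le_div_mul3 (ltW eps_lt1) lam_ge1 d_ge1 _.
have U_gt0 : (1 <= #|U|)%N by apply/card_gt0P; exists u; case/setDP: UXu.
have ext_ge := card_ext_nbhd_ge expX maxX expG (le_trans ler01 lam_ge1) lam_le_s U_gt0 U_small.
have X_gt0 : (1 <= #|X|)%N.
  rewrite card_gt0; apply: contraTneq ext_ge => ->; rewrite ext_nbhd0 cards0 -ltNge.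
  by apply: divr_gt0; [rewrite mulr_gt0 ?ltr0n | exact: lt_le_trans ltr01 d_ge1].
apply: div_le_of_lt_mulD1 lam_ge1 (lt_le_trans ltr01 d_ge1) _ _.
  by rewrite ler1n.
exact: le_lt_trans ext_ge (card_ext_nbhd_lt expX maxX UXu).
Qed.
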